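(* Let $M\ge 0$, $\mathcal{M}=\{0,\dots,M\}$, $T\ge 1$, $c_u,c_l>0$, $0\le\beta\le 1$, and let $(B_t)_{t\ge 0}$ be a Markov chain on $\mathcal{M}$ with known stochastic transition matrix $P$ (rows $P_{s,\cdot}$) and known initial state $B_0=s_0$. At each time $t=1,\dots,T$ a decision-maker chooses an action $r_t\in\mathcal{M}$ as a function of $s_0$ and all past actions and observations, incurring cost $C(B_t;r_t)=c_u(r_t-B_t)$ if $r_t>B_t$ and $C(B_t;r_t)=c_l(B_t-r_t)$ if $r_t\le B_t$; if $r_t>B_t$ the value $B_t$ is observed, while if $r_t\le B_t$ only the fact that $B_t\ge r_t$ is observed. Let $W^{opt}_0(s_0)$ be the minimum over all such policies of $\mathbb{E}\{\sum_{t=1}^T\beta^{t-1}C(B_t;r_t)\mid B_0=s_0\}$. For a probability vector $b$ let $\bar C(b;r)=c_l\sum_{i=r}^M b(i)(i-r)+c_u\sum_{i=0}^{r-1}b(i)(r-i)$ and $\pi^{myopic}(b)=\min\{r\in\mathcal{M}:\sum_{i=0}^r b(i)\ge \frac{c_l}{c_l+c_u}\}$, and define for $s\in\mathcal{M}$ $$W^{FO}_{T-1}(s)=\bar C(P_{s,\cdot};\pi^{myopic}(P_{s,\cdot})),$$ $$W^{FO}_t(s)=\bar C(P_{s,\cdot};\pi^{myopic}(P_{s,\cdot}))+\beta\sum_{i=0}^M P_{s,i}\,W^{FO}_{t+1}(i),\quad t=0,\dots,T-2.$$ Then $W^{opt}_0(s_0)\ge W^{FO}_0(s_0)$.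
   Context: $W^{FO}_0(s_0)$ is the expected discounted cost of a genie policy that observes the actual state at every time step with one unit of delay and plays the myopic action. *)

From HB Require Import structures.
From mathcomp Require Import all_boot all_order all_algebra.
Set Implicit Arguments. Unset Strict Implicit. Unset Printing Implicit Defensive.
Import Order.TTheory GRing.Theory Num.Theory.
Local Open Scope ring_scope.

Section Defs.
Variables (R : realFieldType) (M : nat).
Notation state := 'I_M.+1.

Definition cost (cu cl : R) (b r : state) : R :=
  if (b < r)%N then cu * ((r : nat)%:R - (b : nat)%:R)
  else cl * ((b : nat)%:R - (r : nat)%:R).

(* Observation after playing r when the state is b:
   Some b (exact value) if r > b, None (only "b >= r") otherwise. *)
Definition observe (r b : state) : option state :=
  if (b < r)%N then Some b else None.

(* A (deterministic, history-dependent) policy: given the history of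
   past (action, observation) pairs, choose the next action.
   The initial state s0 is fixed, so dependence on it is implicit. *)
Definition policy := seq (state * option state) -> state.

(* Expected discounted cost of the remaining n steps, given the history
   hist (whose length is the number of elapsed steps t-1) and the
   current (previous-step) state s. Discount beta^(t-1). *)
Fixpoint exp_cost (P : 'M[R]_M.+1) (cu cl beta : R) (pol : policy)
    (n : nat) (hist : seq (state * option state)) (s : state) : R :=
  match n with
  | 0 => 0
  | n'.+1 =>
      let r := pol hist in
      \sum_(j < M.+1) P s j *
        (beta ^+ (size hist) * cost cu cl j r
         + exp_cost P cu cl beta pol n' (rcons hist (r, observe r j)) j)
  end.

Definition policy_cost (P : 'M[R]_M.+1) (cu cl beta : R) (T : nat)
    (pol : policy) (s0 : state) : R :=
  exp_cost P cu cl beta pol T [::] s0.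

Definition Cbar (cu cl : R) (b : state -> R) (r : state) : R :=
  cl * (\sum_(i < M.+1 | (r <= i)%N) b i * ((i : nat)%:R - (r : nat)%:R))
  + cu * (\sum_(i < M.+1 | (i < r)%N) b i * ((r : nat)%:R - (i : nat)%:R)).

Definition myopic_crit (cu cl : R) (b : state -> R) (r : nat) : bool :=
  cl / (cl + cu) <= \sum_(i < M.+1 | (i <= r)%N) b i.

Definition pi_myopic (cu cl : R) (b : state -> R) : state :=
  inord (find (myopic_crit cu cl b) (iota 0 M.+1)).

Definition one_step (P : 'M[R]_M.+1) (cu cl : R) (s : state) : R :=
  Cbar cu cl (P s) (pi_myopic cu cl (P s)).

(* WFO_aux k = W^FO_{T-1-k} *)
Fixpoint WFO_aux (P : 'M[R]_M.+1) (cu cl beta : R) (k : nat) (s : state) : R :=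
  match k with
  | 0 => one_step P cu cl s
  | k'.+1 => one_step P cu cl s
             + beta * \sum_(i < M.+1) P s i * WFO_aux P cu cl beta k' i
  end.

Definition WFO (P : 'M[R]_M.+1) (cu cl beta : R) (T t : nat) (s : state) : R :=
  WFO_aux P cu cl beta (T.-1 - t) s.

End Defs.

From HB Require Import structures.
From mathcomp Require Import all_boot all_order all_algebra.
From mathcomp Require Import ring lra zify.
Set Implicit Arguments. Unset Strict Implicit. Unset Printing Implicit Defensive.
Import Order.TTheory GRing.Theory Num.Theory.
Local Open Scope ring_scope.

(* Whatever a policy has observed, its action r_t is a function of the history
   alone, so conditionally on B_{t-1} = s the expected stage cost is
   Cbar(P_s; r_t), which is at least the newsvendor minimum
   Cbar(P_s; pi^myopic(P_s)). Backward induction on the remaining horizon,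
   conditioning on the previous state, then bounds every policy's expected
   cost-to-go from below by W^FO. *)

Section Newsvendor.
Variables (R : realFieldType) (M : nat) (cu cl : R).
Implicit Types (b : 'I_M.+1 -> R) (i m r : 'I_M.+1).

Definition cdf b (k : nat) : R := \sum_(i < M.+1 | (i < k)%N) b i.

Lemma Cbar_sumE b r : Cbar cu cl b r = \sum_i b i * cost cu cl i r.
Proof.
rewrite /Cbar [RHS](bigID (fun i : 'I_M.+1 => (r <= i)%N)) /= !mulr_sumr.
rewrite [X in _ + X = _](eq_bigl (fun i : 'I_M.+1 => ~~ (r <= i)%N)); last first.
  by move=> i; rewrite ltnNge.
congr (_ + _); apply: eq_bigr => i Hi; rewrite /cost.
- by rewrite ltnNge Hi /=; ring.
- by rewrite -ltnNge in Hi; rewrite Hi; ring.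
Qed.

Lemma sum_threshold_step b (k : nat) : \sum_i b i = 1 ->
  \sum_i b i * (if (i < k)%N then cu else - cl) = (cu + cl) * cdf b k - cl.
Proof.
move=> b1; have b_above : \sum_(i < M.+1 | ~~ (i < k)%N) b i = 1 - cdf b k.
  by rewrite -b1 [in RHS](bigID (fun i : 'I_M.+1 => (i < k)%N)) /cdf /=; ring.
rewrite (bigID (fun i : 'I_M.+1 => (i < k)%N)) /=.
under eq_bigr => i Hi do rewrite Hi.
under [X in _ + X]eq_bigr => i Hi do rewrite (negbTE Hi).
by rewrite -!big_distrl /= -/(cdf b k) b_above; ring.
Qed.

(* Subgradients of the piecewise-linear convex map r |-> cost i r at m, on the
   right (for r >= m) and on the left (for r < m). *)
Lemma cost_subr_ge_right i r m : 0 <= cu -> 0 <= cl -> (m <= r)%N ->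
  ((r : nat)%:R - (m : nat)%:R) * (if (i < m.+1)%N then cu else - cl)
    <= cost cu cl i r - cost cu cl i m.
Proof.
move=> cu_ge0 cl_ge0 le_mr; rewrite /cost ltnS.
have le_mr' : (m : nat)%:R <= (r : nat)%:R :> R by rewrite ler_nat.
case: (ltnP i r) => h1; case: (ltngtP i m) => h2; try (exfalso; lia).
all: rewrite ?h2 in h1 *; move: h1 h2.
all: rewrite -?(ltr_nat R) -?(ler_nat R) => h1 h2; nra.
Qed.

Lemma cost_subr_ge_left i r m : 0 <= cu -> 0 <= cl -> (r < m)%N ->
  ((r : nat)%:R - (m : nat)%:R) * (if (i < m)%N then cu else - cl)
    <= cost cu cl i r - cost cu cl i m.
Proof.
move=> cu_ge0 cl_ge0 lt_rm; rewrite /cost.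
have lt_rm' : (r : nat)%:R < (m : nat)%:R :> R by rewrite ltr_nat.
case: (ltnP i r) => h1; case: (ltnP i m) => h2; try (exfalso; lia).
all: move: h1 h2; rewrite -?(ltr_nat R) -?(ler_nat R) => h1 h2; nra.
Qed.

Lemma Cbar_subr_ge b r m (k : nat) :
  (forall i, 0 <= b i) -> \sum_i b i = 1 ->
  (forall i, ((r : nat)%:R - (m : nat)%:R) * (if (i < k)%N then cu else - cl)
               <= cost cu cl i r - cost cu cl i m) ->
  ((r : nat)%:R - (m : nat)%:R) * ((cu + cl) * cdf b k - cl)
    <= Cbar cu cl b r - Cbar cu cl b m.
Proof.
move=> b_ge0 b1 subgrad.
rewrite -sum_threshold_step // !Cbar_sumE -sumrB mulr_sumr.
by apply: ler_sum => i _; rewrite -mulrBr mulrCA ler_wpM2l.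
Qed.

Lemma pi_myopicP b : cl / (cl + cu) <= \sum_i b i ->
  myopic_crit cu cl b (pi_myopic cu cl b)
  /\ forall k, (k < pi_myopic cu cl b)%N -> ~~ myopic_crit cu cl b k.
Proof.
move=> crit_M; rewrite /pi_myopic; set k := find _ _.
have crit_has : has (myopic_crit cu cl b) (iota 0 M.+1).
  apply/hasP; exists M; first by rewrite mem_iota; lia.
  by rewrite /myopic_crit (eq_bigl xpredT) // => i; rewrite leq_ord.
have lt_kM : (k < M.+1)%N by rewrite -[M.+1](size_iota 0) -has_find.
rewrite inordK //.
split; first by have := nth_find 0 crit_has; rewrite nth_iota.
move=> j lt_jk; have := before_find 0 lt_jk.
by rewrite nth_iota ?add0n => [->|]; last exact: ltn_trans lt_jk lt_kM.
Qed.

Lemma myopic_critE b (k : nat) : 0 < cl + cu ->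
  myopic_crit cu cl b k = (cl <= (cu + cl) * cdf b k.+1).
Proof.
move=> sum_gt0; rewrite /myopic_crit ler_pdivrMr // mulrC addrC.
by congr (_ <= _ * _); apply: eq_bigl => i; rewrite ltnS.
Qed.

Lemma Cbar_myopic_le b r : 0 < cu -> 0 < cl ->
  (forall i, 0 <= b i) -> \sum_i b i = 1 ->
  Cbar cu cl b (pi_myopic cu cl b) <= Cbar cu cl b r.
Proof.
move=> cu_gt0 cl_gt0 b_ge0 b1.
have [cu_ge0 cl_ge0] := (ltW cu_gt0, ltW cl_gt0).
have sum_gt0 : 0 < cl + cu by exact: addr_gt0.
have crit_M : cl / (cl + cu) <= \sum_i b i.
  by rewrite b1 ler_pdivrMr // mul1r lerDl.
have [crit_m below_m] := pi_myopicP crit_M.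
set m := pi_myopic cu cl b in crit_m below_m *; rewrite -subr_ge0.
(* The criterion holding at m makes the right subgradient of Cbar b at m
   nonnegative; its failing at m - 1 makes the left one nonpositive. *)
case: (leqP m r) => [le_mr|lt_rm].
- have subgrad i := cost_subr_ge_right i cu_ge0 cl_ge0 le_mr.
  apply: le_trans _ (Cbar_subr_ge b_ge0 b1 subgrad).
  apply: mulr_ge0; first by rewrite subr_ge0 ler_nat.
  by move: crit_m; rewrite myopic_critE // subr_ge0.
- have subgrad i := cost_subr_ge_left i cu_ge0 cl_ge0 lt_rm.
  apply: le_trans _ (Cbar_subr_ge b_ge0 b1 subgrad).
  apply: mulr_le0; first by rewrite subr_le0 ler_nat ltnW.
  have m_gt0 : (0 < m)%N by apply: leq_ltn_trans lt_rm.
  have := below_m m.-1%N; rewrite ltn_predL myopic_critE // prednK //.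
  by rewrite -ltNge subr_le0 => /(_ m_gt0) /ltW.
Qed.

End Newsvendor.

Section GenieBound.
Variables (R : realFieldType) (M : nat) (P : 'M[R]_M.+1) (cu cl beta : R).
Variable pol : policy M.
Hypotheses (cu_gt0 : 0 < cu) (cl_gt0 : 0 < cl) (beta_ge0 : 0 <= beta).
Hypotheses (P_ge0 : forall i j, 0 <= P i j)
           (P_stochastic : forall i, \sum_(j < M.+1) P i j = 1).

Lemma exp_costSE n hist s :
  exp_cost P cu cl beta pol n.+1 hist s =
  beta ^+ size hist * Cbar cu cl (P s) (pol hist)
  + \sum_j P s j *
      exp_cost P cu cl beta pol n (rcons hist (pol hist, observe (pol hist) j)) j.
Proof.
rewrite /= Cbar_sumE !mulr_sumr -big_split /=.
by apply: eq_bigr => j _; ring.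
Qed.

Lemma one_step_le_stage_cost s hist :
  one_step P cu cl s <= Cbar cu cl (P s) (pol hist).
Proof. exact: Cbar_myopic_le. Qed.

Lemma WFO_aux_le_exp_cost n hist s :
  beta ^+ size hist * WFO_aux P cu cl beta n s
    <= exp_cost P cu cl beta pol n.+1 hist s.
Proof.
elim: n hist s => [|n IHn] hist s; rewrite exp_costSE.
- rewrite big1 ?addr0 => [|j _]; last by rewrite mulr0.
  by apply: ler_wpM2l; [exact: exprn_ge0 | exact: one_step_le_stage_cost].
- rewrite [WFO_aux _ _ _ _ _.+1 _]/= mulrDr; apply: lerD.
    by apply: ler_wpM2l; [exact: exprn_ge0 | exact: one_step_le_stage_cost].
  rewrite mulrA -exprSr mulr_sumr; apply: ler_sum => j _.
  rewrite mulrCA; apply: ler_wpM2l; first exact: P_ge0.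
  by have := IHn (rcons hist (pol hist, observe (pol hist) j)) j; rewrite size_rcons.
Qed.

End GenieBound.

Theorem proposition5 (R : realFieldType) (M : nat) (P : 'M[R]_M.+1)
  (cu cl beta : R) (T : nat) (s0 : 'I_M.+1) :
  (1 <= T)%N -> 0 < cu -> 0 < cl -> 0 <= beta -> beta <= 1 ->
  (forall i j, 0 <= P i j) ->
  (forall i, \sum_(j < M.+1) P i j = 1) ->
  forall pol : policy M,
    WFO P cu cl beta T 0 s0 <= policy_cost P cu cl beta T pol s0.
Proof.
case: T => // T _ cu_gt0 cl_gt0 beta_ge0 _ P_ge0 P_stochastic pol.
have := WFO_aux_le_exp_cost pol cu_gt0 cl_gt0 beta_ge0 P_ge0 P_stochastic T [::] s0.
by rewrite expr0 mul1r /WFO subn0.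
Qed.
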